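(* For every $\alpha,\beta\in\mathcal W(\tau_\lambda;\mathbb Z)$, $Z_\alpha Z_\beta=\omega^{2\Theta(\alpha,\beta)}Z_{\alpha+\beta}$ in $\mathcal Z^\omega(\lambda)$. In particular $Z_\alpha Z_\beta=\omega^{4\Theta(\alpha,\beta)}Z_\beta Z_\alpha$.
   Context: $S$ is a closed oriented surface $\bar S$ of genus $g$ minus $s\ge1$ points, $2-2g-s<0$; $\lambda$ is an ideal triangulation (triangulation of $\bar S$ with vertices exactly the removed points) with edges $\lambda_1,\dots,\lambda_n$. Let $a_{ij}\in\{0,1,2\}$ be the number of times an end of $\lambda_j$ immediately succeeds an end of $\lambda_i$ going counterclockwise around a puncture, $\sigma_{ij}=a_{ij}-a_{ji}$. For $\omega\in\mathbb C-\{0\}$, $\mathcal T^\omega(\lambda)$ is generated by $Z_i^{\pm1}$ with relations $Z_iZ_j=\omega^{2\sigma_{ij}}Z_jZ_i$; Weyl ordering $[Z_{i_1}^{n_1}\cdots Z_{i_l}^{n_l}]=\omega^{-\sum_{u<v}n_un_v\sigma_{i_ui_v}}Z_{i_1}^{n_1}\cdots Z_{i_l}^{n_l}$. $\mathcal Z^\omega(\lambda)$ is the subalgebra generated by monomials $Z_1^{k_1}\cdots Z_n^{k_n}$ such that $k_{i_1}+k_{i_2}+k_{i_3}$ is even for the sides $\lambda_{i_1},\lambda_{i_2},\lambda_{i_3}$ of every face. $\tau_\lambda$ is the train track which in each face of $\lambda$ consists of three arcs each joining two sides and turning around the corner between them, with one switch on each edge $\lambda_i$. $\mathcal W(\tau_\lambda;\mathbb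 Z)$ is the group of integer edge weights on $\tau_\lambda$ satisfying the switch conditions; $\alpha_i$ is the total weight on one side of the switch on $\lambda_i$, and $Z_\alpha=[Z_1^{\alpha_1}\cdots Z_n^{\alpha_n}]$. Thurston intersection form: $\Theta(\alpha,\beta)=\frac12\sum_{(e,e')}\bigl(\alpha(e)\beta(e')-\alpha(e')\beta(e)\bigr)$, the sum over all pairs $(e,e')$ of (germs of) edges of $\tau_\lambda$ emerging on the same side of a switch with $e$ to the right of $e'$ (not necessarily adjacent); $\Theta(\alpha,\beta)$ is an integer. *)

From HB Require Import structures.
From mathcomp Require Import all_boot all_order all_algebra.
From mathcomp Require Import complex.
From mathcomp Require Import reals.
Set Implicit Arguments. Unset Strict Implicit. Unset Printing Implicit Defensive.
Import Order.TTheory GRing.Theory Num.Theory.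
Local Open Scope ring_scope.

(* [n] edges lambda_0 .. lambda_{n-1}, a finite type [F] of faces, and       *)
(* [side f k] (k : 'I_3) = the label of the k-th side of the face f, the     *)
(* sides s_0, s_1, s_2 being listed in COUNTERCLOCKWISE order along the      *)
(* boundary of the face (for the orientation of S).  Corner [k] of [f] is    *)
(* the corner between sides k and k+1 (indices mod 3, via [ordS]).           *)
(* Gluing is forced: each edge label occurs on exactly two face-sides, which *)
(* are identified by the (orientation reversing) gluing.                     *)

Definition face_side (F : finType) := (F * 'I_3)%type.

Definition face_adj (n : nat) (F : finType) (side : F -> 'I_3 -> 'I_n) : rel F :=
  fun f g => [exists k : 'I_3, exists l : 'I_3, side f k == side g l].

Definition ideal_triangulation (n : nat) (F : finType)
    (side : F -> 'I_3 -> 'I_n) : Prop :=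
  [/\
      forall i : 'I_n, #|[set p : face_side F | side p.1 p.2 == i]| = 2%N,
      forall f g : F, connect (face_adj side) f g
    & (* S is not empty of faces (equivalently 2 - 2g - s < 0) *)
      (0 < #|F|)%N].

(* a_{ij}: number of times an end of lambda_j immediately succeeds an end of *)
(* lambda_i going counterclockwise around a puncture.  At corner k of a face *)
(* (between s_k and s_{k+1}), going counterclockwise around the vertex, the  *)
(* end of s_k immediately succeeds the end of s_{k+1}.                       *)
Definition a_coef (n : nat) (F : finType) (side : F -> 'I_3 -> 'I_n)
    (i j : 'I_n) : nat :=
  #|[set p : face_side F | (side p.1 (ordS p.2) == i) && (side p.1 p.2 == j)]|.

Definition sigma (n : nat) (F : finType) (side : F -> 'I_3 -> 'I_n)
    (i j : 'I_n) : int :=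
  (a_coef side i j)%:Z - (a_coef side j i)%:Z.

(* The train track tau_lambda: in face f, the edge (arc) number k turns      *)
(* around corner k, joining the switches on sides k and k+1.  An integer     *)
(* edge weight is a function w : F -> 'I_3 -> int.                           *)
(* On the side of the switch of lambda_i facing f (where side f k = i), the  *)
(* emerging germs are those of arcs k-1 and k; their total weight is         *)
(* [side_weight w f k].                                                      *)

Definition side_weight (F : finType) (w : F -> 'I_3 -> int) (f : F) (k : 'I_3)
  : int := w f k + w f (ord_pred k).

Definition is_edge_weight (n : nat) (F : finType) (side : F -> 'I_3 -> 'I_n)
    (w : F -> 'I_3 -> int) : Prop :=
  forall (f g : F) (k l : 'I_3), side f k = side g l ->
    side_weight w f k = side_weight w g l.

Definition add_weight (F : finType) (w w' : F -> 'I_3 -> int) :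
  F -> 'I_3 -> int := fun f k => w f k + w' f k.

Definition edge_coord (n : nat) (F : finType) (side : F -> 'I_3 -> 'I_n)
    (w : F -> 'I_3 -> int) (i : 'I_n) : int :=
  if [pick p : face_side F | side p.1 p.2 == i] is Some p
  then side_weight w p.1 p.2 else 0.

(* Thurston form.  Standing at the switch on side k of f and looking into f, *)
(* the germ of arc k (towards corner k, at the end of s_k) is to the right   *)
(* of the germ of arc k-1.  [thurston2] is the sum over all pairs, i.e.      *)
(* 2 * Theta; Theta is its half (an integer, as stated in the paper).        *)
Definition thurston2 (F : finType) (a b : F -> 'I_3 -> int) : int :=
  \sum_(p : face_side F)
     (a p.1 p.2 * b p.1 (ord_pred p.2) - a p.1 (ord_pred p.2) * b p.1 p.2).

Definition thurston (F : finType) (a b : F -> 'I_3 -> int) : int :=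
  (thurston2 a b %/ 2)%Z.

(* [weyl] k = [Z_0^{k_0} ... Z_{n-1}^{k_{n-1}}]                              *)

Definition quantum_torus_rel (n : nat) (F : finType) (side : F -> 'I_3 -> 'I_n)
    (R : realType) (omega : R[i]) (A : unitAlgType R[i]) (Z : 'I_n -> A) : Prop :=
  (forall i, Z i \is a GRing.unit) /\
  (forall i j, Z i * Z j = omega ^ (2 * sigma side i j) *: (Z j * Z i)).

Definition weyl (n : nat) (F : finType) (side : F -> 'I_3 -> 'I_n)
    (R : realType) (omega : R[i]) (A : unitAlgType R[i]) (Z : 'I_n -> A)
    (k : 'I_n -> int) : A :=
  omega ^ (- \sum_(u < n) \sum_(v < n | (u < v)%N) k u * k v * sigma side u v)
  *: \prod_(i < n) Z i ^ k i.

Definition Zw (n : nat) (F : finType) (side : F -> 'I_3 -> 'I_n)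
    (R : realType) (omega : R[i]) (A : unitAlgType R[i]) (Z : 'I_n -> A)
    (w : F -> 'I_3 -> int) : A :=
  weyl side omega Z (edge_coord side w).

From HB Require Import structures.
From mathcomp Require Import all_boot all_order all_algebra.
From mathcomp Require Import complex.
From mathcomp Require Import reals.
From mathcomp Require Import zify ring.
Import GRing.Theory Num.Theory.
Local Open Scope ring_scope.

Set Implicit Arguments. Unset Strict Implicit.

(** In a quantum torus, moving the generators of [Z_b] past those of [Z_a]
  shows that the product of two Weyl-ordered monomials is
  [omega ^ <a, b>] times the Weyl-ordered monomial of [a + b], where
  [<a, b> = sum_(u, v) a_u b_v sigma_uv].  Evaluated on the edge coordinates
  of train-track weights, [sigma] counts consecutive ends around the
  punctures, which are exactly the corners of the faces; expanding each edge
  coordinate as the total weight on one side of its switch regroups [<a, b>]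
  face by face into the Thurston sum [2 Theta].  That sum is even because
  every edge is a side of exactly two face-sides. *)

Section QCommute.
Variables (K : fieldType) (A : unitAlgType K).

Definition qcommute (x y : A) (e : K) := x * y = e *: (y * x).

Lemma qcommuteMr (x y y' : A) (e e' : K) :
  qcommute x y e -> qcommute x y' e' -> qcommute x (y * y') (e * e').
Proof.
rewrite /qcommute => xy xy'.
by rewrite mulrA xy -scalerAl -[y * x * y']mulrA xy' -scalerAr scalerA mulrA.
Qed.

Lemma qcommute_sym (x y : A) (e : K) :
  e != 0 -> qcommute x y e -> qcommute y x e^-1.
Proof. by rewrite /qcommute => e_neq0 ->; rewrite scalerA mulVf // scale1r. Qed.

Lemma qcommuteVl (x y : A) (e : K) :
  x \is a GRing.unit -> e != 0 -> qcommute x y e -> qcommute x^-1 y e^-1.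
Proof.
move=> Ux e_neq0 /(qcommute_sym e_neq0) yx.
rewrite /qcommute -{1}(mulrK Ux y) yx -scalerAl -scalerAr; congr (_ *: _).
by rewrite !mulrA mulVr ?mul1r.
Qed.

Lemma qcommuteXl (x y : A) (e : K) (k : nat) :
  qcommute x y e -> qcommute (x ^+ k) y (e ^+ k).
Proof.
rewrite /qcommute => xy; elim: k => [|k IHk]; first by rewrite !expr0 mul1r mulr1 scale1r.
rewrite !exprSr -mulrA xy -scalerAr [x ^+ k * (y * x)]mulrA IHk -scalerAl.
by rewrite scalerA mulrC [y * (_ * _)]mulrA.
Qed.

Lemma qcommuteXzl (x y : A) (e : K) (m : int) :
  x \is a GRing.unit -> e != 0 -> qcommute x y e -> qcommute (x ^ m) y (e ^ m).
Proof.
move=> Ux e_neq0 xy; case: m => k; first exact: qcommuteXl.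
by apply: qcommuteVl; [exact: unitrX | exact: expf_neq0 | exact: qcommuteXl].
Qed.

Lemma qcommuteXzr (x y : A) (e : K) (m : int) :
  y \is a GRing.unit -> e != 0 -> qcommute x y e -> qcommute x (y ^ m) (e ^ m).
Proof.
move=> Uy e_neq0 /(qcommute_sym e_neq0) /(qcommuteXzl m Uy (invr_neq0 e_neq0)).
by move=> /(qcommute_sym (expfz_neq0 _ (invr_neq0 e_neq0))); rewrite expfV invrK.
Qed.

End QCommute.

Section PairSums.
Variables (V : nmodType) (n : nat).

Lemma sorted_ltn_index_enum_ord : sorted (fun u v : 'I_n => (u < v)%N) (index_enum 'I_n).
Proof.
have := iota_ltn_sorted 0 n.
by rewrite -val_enum_ord sorted_map [index_enum _]unlock -enumT; exact: id.
Qed.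

Lemma sum_ltn_pairs_cons (g : 'I_n -> 'I_n -> V) (x : 'I_n) (r : seq 'I_n) :
  sorted (fun u v : 'I_n => (u < v)%N) (x :: r) ->
  \sum_(u <- x :: r) \sum_(v <- x :: r | (u < v)%N) g u v
  = \sum_(v <- r) g x v + \sum_(u <- r) \sum_(v <- r | (u < v)%N) g u v.
Proof.
move=> /= xr_sorted.
have x_lt_r : all (fun v : 'I_n => (x < v)%N) r.
  by apply: (order_path_min _ xr_sorted) => ? ? ?; apply: ltn_trans.
rewrite !big_cons ltnn -big_filter (all_filterP x_lt_r); congr (_ + _).
rewrite [LHS]big_seq [RHS]big_seq; apply: eq_bigr => u ur.
by rewrite big_cons ltnNge ltnW ?(allP x_lt_r u).
Qed.

Lemma sum_pairs_split_ltn (G : 'I_n -> 'I_n -> V) : (forall u, G u u = 0) ->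
  \sum_(u < n) \sum_(v < n) G u v
  = \sum_(u < n) \sum_(v < n | (u < v)%N) (G u v + G v u).
Proof.
move=> G_diag0.
transitivity (\sum_(u < n) \sum_(v < n)
  ((if (u < v)%N then G u v else 0) + (if (v < u)%N then G u v else 0))).
  apply: eq_bigr => u _; apply: eq_bigr => v _.
  case: ltngtP => uv; rewrite ?addr0 ?add0r //.
  by rewrite (val_inj uv) G_diag0.
under eq_bigr => u _ do rewrite big_split /=.
rewrite big_split /= [X in _ + X]exchange_big -big_split /=; apply: eq_bigr => u _.
rewrite -big_split [RHS]big_mkcond; apply: eq_bigr => v _.
by case: ifP => _ /=; rewrite ?addr0.
Qed.

End PairSums.

Section QuantumTorus.
Variables (K : fieldType) (A : unitAlgType K) (n : nat).
Variables (w : K) (s : 'I_n -> 'I_n -> int) (Z : 'I_n -> A).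
Hypothesis w_neq0 : w != 0.
Hypothesis Z_unit : forall i, Z i \is a GRing.unit.
Hypothesis Z_qcommute : forall i j, qcommute (Z i) (Z j) (w ^ (2 * s i j)).
Hypothesis s_anti : forall u v, s v u = - s u v.

Definition skew_form (a b : 'I_n -> int) : int :=
  \sum_(u < n) \sum_(v < n) a u * b v * s u v.

Definition weyl_exponent (k : 'I_n -> int) : int :=
  \sum_(u < n) \sum_(v < n | (u < v)%N) k u * k v * s u v.

Definition weyl_monomial (k : 'I_n -> int) : A :=
  w ^ (- weyl_exponent k) *: \prod_(i < n) Z i ^ k i.

Lemma qcommute_genXz i j (a b : int) :
  qcommute (Z i ^ a) (Z j ^ b) (w ^ (2 * s i j * a * b)).
Proof.
have := qcommuteXzl a (Z_unit i) (expfz_neq0 _ w_neq0) (Z_qcommute i j).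
rewrite exprz_exp => /(qcommuteXzr b (Z_unit j) (expfz_neq0 _ w_neq0)).
by rewrite exprz_exp.
Qed.

Lemma qcommute_genXz_prod j b (a : 'I_n -> int) (r : seq 'I_n) :
  qcommute (Z j ^ b) (\prod_(i <- r) Z i ^ a i)
           (w ^ (\sum_(i <- r) 2 * s j i * b * a i)).
Proof.
elim: r => [|i r IHr]; first by rewrite /qcommute !big_nil mulr1 mul1r expr0z scale1r.
by rewrite !big_cons expfzDr //; apply: qcommuteMr IHr; apply: qcommute_genXz.
Qed.

Lemma prod_genXz_mul_sorted (a b c : 'I_n -> int) (r : seq 'I_n) :
  (forall i, c i = a i + b i) -> sorted (fun u v : 'I_n => (u < v)%N) r ->
  (\prod_(i <- r) Z i ^ a i) * (\prod_(i <- r) Z i ^ b i)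
  = w ^ (- \sum_(u <- r) \sum_(v <- r | (u < v)%N) 2 * s u v * b u * a v)
    *: \prod_(i <- r) Z i ^ c i.
Proof.
move=> cE; elim: r => [|x r IHr] r_sorted.
  by rewrite !big_nil mulr1 expr0z scale1r.
rewrite sum_ltn_pairs_cons // !big_cons.
set Pa := \prod_(i <- r) Z i ^ a i.
set e := w ^ (\sum_(i <- r) 2 * s x i * b x * a i).
have e_neq0 : e != 0 by rewrite expfz_neq0.
have PaZx : Pa * Z x ^ b x = e^-1 *: (Z x ^ b x * Pa).
  exact/(qcommute_sym e_neq0)/qcommute_genXz_prod.
rewrite -mulrA [Pa * _]mulrA PaZx -scalerAl -scalerAr !mulrA -exprzDr // -cE -mulrA.
rewrite IHr ?(path_sorted r_sorted) // -scalerAr scalerA; congr (_ *: _).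
by rewrite opprD expfzDr // /e invr_expz.
Qed.

Lemma skew_form_anti a b : skew_form b a = - skew_form a b.
Proof.
rewrite /skew_form exchange_big -sumrN; apply: eq_bigr => u _; rewrite -sumrN.
by apply: eq_bigr => v _; rewrite s_anti; ring.
Qed.

Lemma weyl_exponentD a b c : (forall i, c i = a i + b i) ->
  weyl_exponent c = weyl_exponent a + weyl_exponent b
    + \sum_(u < n) \sum_(v < n | (u < v)%N) 2 * s u v * b u * a v + skew_form a b.
Proof.
move=> cE; have s_diag0 u : s u u = 0 by have := s_anti u u; lia.
rewrite /skew_form (sum_pairs_split_ltn (G := fun u v => a u * b v * s u v)); last first.
  by move=> u; rewrite s_diag0 mulr0.
rewrite /weyl_exponent -!big_split; apply: eq_bigr => u _.
rewrite -!big_split; apply: eq_bigr => v _.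
by rewrite /= !cE [s v u]s_anti; ring.
Qed.

Lemma weyl_monomialM a b c : (forall i, c i = a i + b i) ->
  weyl_monomial a * weyl_monomial b = w ^ skew_form a b *: weyl_monomial c.
Proof.
move=> cE; rewrite /weyl_monomial -scalerAl -scalerAr scalerA.
rewrite (prod_genXz_mul_sorted cE (sorted_ltn_index_enum_ord n)) !scalerA.
by rewrite -!expfzDr // (weyl_exponentD cE); congr (w ^ _ *: _); ring.
Qed.

Lemma weyl_monomial_qcommute a b :
  qcommute (weyl_monomial a) (weyl_monomial b) (w ^ (2 * skew_form a b)).
Proof.
pose c i := a i + b i.
rewrite /qcommute (weyl_monomialM (c := c)) // (weyl_monomialM (c := c)); last first.
  by move=> i; rewrite addrC.
rewrite [RHS]scalerA -expfzDr // skew_form_anti.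
by congr (w ^ _ *: _); ring.
Qed.

End QuantumTorus.

Lemma ord3_cycleE :
  ((ordS (0 : 'I_3) = 1) * (ordS (1 : 'I_3) = 2) * (ordS (2 : 'I_3) = 0)
   * (ord_pred (0 : 'I_3) = 2) * (ord_pred (1 : 'I_3) = 0)
   * (ord_pred (2 : 'I_3) = 1))%type.
Proof. by do !split; apply/val_inj. Qed.

Lemma sum_ord3 (V : nmodType) (h : 'I_3 -> V) : \sum_(k < 3) h k = h 0 + h 1 + h 2.
Proof.
by rewrite !big_ord_recr big_ord0 /= add0r; congr (h _ + h _ + h _); apply/val_inj.
Qed.

Lemma sum_face_side (V : nmodType) (F : finType) (h : face_side F -> V) :
  \sum_(p : face_side F) h p = \sum_(f : F) \sum_(k < 3) h (f, k).
Proof. by rewrite pair_big; apply: eq_bigr => -[]. Qed.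

Section FiberSums.
Variables (T : finType) (n : nat).

Lemma sum_card_fiber (g : 'I_n -> int) (s1 : T -> 'I_n) :
  \sum_(u < n) g u * #|[set p | s1 p == u]|%:Z = \sum_(p : T) g (s1 p).
Proof.
transitivity (\sum_(u < n) \sum_(p : T) (if s1 p == u then g u else 0)).
  apply: eq_bigr => u _; rewrite -big_mkcond /=.
  rewrite (eq_bigl (fun p => p \in [set q | s1 q == u])); last by move=> p; rewrite inE.
  by rewrite sumr_const -mulr_natr natz.
rewrite exchange_big /=; apply: eq_bigr => p _.
rewrite (bigD1 (s1 p)) //= eqxx big1 ?addr0 // => u /negbTE s1p_neq_u.
by rewrite eq_sym s1p_neq_u.
Qed.

Lemma sum_card_fiber2 (g : 'I_n -> 'I_n -> int) (s1 s2 : T -> 'I_n) :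
  \sum_(u < n) \sum_(v < n) g u v * #|[set p | (s1 p == u) && (s2 p == v)]|%:Z
  = \sum_(p : T) g (s1 p) (s2 p).
Proof.
transitivity (\sum_(u < n) \sum_(v < n) \sum_(p : T)
                 (if (s1 p == u) && (s2 p == v) then g u v else 0)).
  apply: eq_bigr => u _; apply: eq_bigr => v _; rewrite -big_mkcond /=.
  rewrite (eq_bigl (fun p => p \in [set q | (s1 q == u) && (s2 q == v)])); last first.
    by move=> p; rewrite inE.
  by rewrite sumr_const -mulr_natr natz.
under eq_bigr => u _ do rewrite exchange_big /=.
rewrite exchange_big /=; apply: eq_bigr => p _.
rewrite (bigD1 (s1 p)) //= (bigD1 (s2 p)) //= !eqxx /=.
rewrite big1 => [|v /negbTE s2p_neq_v]; last by rewrite eq_sym s2p_neq_v.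
rewrite addr0 big1 ?addr0 // => u /negbTE s1p_neq_u.
by apply: big1 => v _; rewrite eq_sym s1p_neq_u.
Qed.

End FiberSums.

Section TrainTrackWeights.
Variables (n : nat) (F : finType) (side : F -> 'I_3 -> 'I_n).

Lemma edge_coord_side (a : F -> 'I_3 -> int) : is_edge_weight side a ->
  forall f k, edge_coord side a (side f k) = side_weight a f k.
Proof.
move=> a_weight f k; rewrite /edge_coord; case: pickP => [p /eqP | /(_ (f, k))].
  exact: a_weight.
by rewrite /= eqxx.
Qed.

Lemma edge_coordD (a b : F -> 'I_3 -> int) i :
  edge_coord side (add_weight a b) i = edge_coord side a i + edge_coord side b i.
Proof.
rewrite /edge_coord; case: pickP => [p _ | _]; last by rewrite addr0.
by rewrite /side_weight /add_weight addrACA.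
Qed.

Lemma sigma_anti u v : sigma side v u = - sigma side u v.
Proof. by rewrite /sigma opprB. Qed.

Lemma skew_form_edge_coord (a b : F -> 'I_3 -> int) :
  is_edge_weight side a -> is_edge_weight side b ->
  skew_form (sigma side) (edge_coord side a) (edge_coord side b) = thurston2 a b.
Proof.
move=> a_weight b_weight; set ea := edge_coord side a; set eb := edge_coord side b.
transitivity (\sum_(u < n) \sum_(v < n) (ea u * eb v) * (a_coef side u v)%:Z
            - \sum_(u < n) \sum_(v < n) (ea u * eb v) * (a_coef side v u)%:Z).
  rewrite -sumrB; apply: eq_bigr => u _; rewrite -sumrB; apply: eq_bigr => v _.
  by rewrite /sigma mulrBr.
rewrite [X in _ - X]exchange_big /a_coef /=.
rewrite (sum_card_fiber2 (fun u v => ea u * eb v) (fun p => side p.1 (ordS p.2))).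
rewrite (sum_card_fiber2 (fun v u => ea u * eb v) (fun p => side p.1 (ordS p.2))).
rewrite -sumrB /thurston2 !sum_face_side; apply: eq_bigr => f _.
rewrite !sum_ord3 /= /ea /eb !edge_coord_side // /side_weight !ord3_cycleE.
ring.
Qed.

Hypothesis side_card2 :
  forall i, #|[set p : face_side F | side p.1 p.2 == i]| = 2%N.

Lemma thurston2_double (a b : F -> 'I_3 -> int) :
  is_edge_weight side a -> is_edge_weight side b ->
  thurston2 a b = 2 * (\sum_(p : face_side F) (a p.1 p.2 + a p.1 (ordS p.2)) * b p.1 p.2
                       - \sum_(i < n) edge_coord side a i * edge_coord side b i).
Proof.
move=> a_weight b_weight; set ea := edge_coord side a; set eb := edge_coord side b.
have diag_twice : \sum_(i < n) ea i * eb i * 2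
    = \sum_(p : face_side F) ea (side p.1 p.2) * eb (side p.1 p.2).
  rewrite -(sum_card_fiber (fun i => ea i * eb i) (fun p => side p.1 p.2)).
  by apply: eq_bigr => i _; rewrite side_card2.
have per_face : thurston2 a b + \sum_(p : face_side F) ea (side p.1 p.2) * eb (side p.1 p.2)
    = 2 * \sum_(p : face_side F) (a p.1 p.2 + a p.1 (ordS p.2)) * b p.1 p.2.
  rewrite /thurston2 !sum_face_side mulr_sumr -big_split; apply: eq_bigr => f _.
  rewrite !sum_ord3 /= /ea /eb !edge_coord_side // /side_weight !ord3_cycleE.
  ring.
rewrite mulrBr -per_face -diag_twice mulr_sumr.
under [X in _ = _ - X]eq_bigr => i _ do rewrite mulrC.
ring.
Qed.

Lemma mul2_thurston (a b : F -> 'I_3 -> int) :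
  is_edge_weight side a -> is_edge_weight side b -> 2 * thurston a b = thurston2 a b.
Proof. by move=> a_weight b_weight; rewrite /thurston thurston2_double ?mulKz. Qed.

End TrainTrackWeights.

Unset Implicit Arguments. Set Strict Implicit.

Theorem lemma3p2 (n : nat) (F : finType) (side : F -> 'I_3 -> 'I_n)
  (R : realType) (omega : R[i]) (A : unitAlgType R[i]) (Z : 'I_n -> A) :
  ideal_triangulation side ->
  omega != 0 ->
  quantum_torus_rel side omega Z ->
  forall alpha beta : F -> 'I_3 -> int,
    is_edge_weight side alpha -> is_edge_weight side beta ->
    Zw side omega Z alpha * Zw side omega Z beta
      = omega ^ (2 * thurston alpha beta) *: Zw side omega Z (add_weight alpha beta)
    /\
    Zw side omega Z alpha * Zw side omega Z beta
      = omega ^ (4 * thurston alpha beta) *: (Zw side omega Z beta * Zw side omega Z alpha).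
Proof.
move=> [side_card2 _ _] omega_neq0 [Z_unit Z_comm] al be al_weight be_weight.
have ZwE a : Zw side omega Z a = weyl_monomial omega (sigma side) Z (edge_coord side a)
  by [].
have skew_thurston :
    skew_form (sigma side) (edge_coord side al) (edge_coord side be) = 2 * thurston al be.
  by rewrite (mul2_thurston side_card2 al_weight be_weight) skew_form_edge_coord.
rewrite !ZwE; split.
  by rewrite (weyl_monomialM omega_neq0 Z_unit Z_comm (@sigma_anti _ _ side)
                             (edge_coordD side al be)) skew_thurston.
have := weyl_monomial_qcommute omega_neq0 Z_unit Z_comm (@sigma_anti _ _ side)
          (edge_coord side al) (edge_coord side be).
by rewrite /qcommute skew_thurston mulrA.
Qed.
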